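(* Let $T\in S(n,d)$ and let $\sigma$ be a simplex on $\gamma_d$ with vertices among the $n$ points of $C(n,d)$. Then $\sigma\le_{d+1}T$ if and only if for every $\tau\in T$, either $\sigma$ and $\tau$ do not overlap in $\mathbb{R}^d$ or $\sigma<_{d+1}\tau$.
   Context: $\gamma_d=\{(t,t^2,\dots,t^d):t\in\mathbb{R}\}$. Fix $t_1<\dots<t_n$ and the points $\gamma_d(t_i)$, identified with $i\in[n]$; $C(n,d)$ is their convex hull (cyclic polytope). $S(n,d)$ is the set of triangulations of $C(n,d)$ (geometric simplicial complexes with union $C(n,d)$) whose vertices lie in $[n]$. A simplex is a subset $\sigma$ of size at most $d+1$, identified with $\mathrm{conv}(\sigma)$; two simplices overlap if $\mathrm{conv}(\sigma)\cap\mathrm{conv}(\tau)\supsetneq\mathrm{conv}(\sigma\cap\tau)$. For $\sigma=\{\gamma_d(s_1),\dots,\gamma_d(s_k)\}$, the height function $h_\sigma:\mathrm{conv}(\sigma)\to\mathbb{R}$ gives the last coordinate of the point of $\mathrm{conv}\{\gamma_{d+1}(s_1),\dots,\gamma_{d+1}(s_k)\}$ projecting (by deleting the last coordinate) to $p$. $\sigma<_{d+1}\tau$ means $\sigma,\tau$ overlap in $\mathbb{R}^d$ and $h_\sigma\le h_\tau$ on the common domain. For $T\in S(n,d)$, $h_T:C(n,d)\to\mathbb{R}$ is defined by $h_T(p)=h_\tau(p)$ for $p\in\mathrm{conv}(\tau)$, $\tau\in T$ (well defined). $\sigma\le_{d+1}T$ means $h_\sigma(p)\le h_T(p)$ for all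 $p\in\mathrm{conv}(\sigma)$. *)

From HB Require Import structures.
From mathcomp Require Import all_boot all_order all_algebra.
From mathcomp Require Import boolp classical_sets reals.
Unset Printing Implicit Defensive.
Import Order.TTheory GRing.Theory Num.Theory.
Local Open Scope ring_scope.
Local Open Scope classical_set_scope.

Definition gamma {R : realType} (d : nat) (s : R) : 'rV[R]_d :=
  \row_(k < d) s ^+ k.+1.

Definition convex_coeffs {R : realType} {n : nat} (sg : {set 'I_n})
  (lam : 'I_n -> R) : Prop :=
  [/\ forall i, 0 <= lam i, forall i, i \notin sg -> lam i = 0
    & \sum_i lam i = 1].

Definition conv {R : realType} {n : nat} (d : nat) (t : 'I_n -> R) (sg : {set 'I_n})
  : set 'rV[R]_d :=
  [set p | exists lam, convex_coeffs sg lam /\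
                      p = \sum_i lam i *: gamma d (t i)].

(* y is the last coordinate of the point of conv{gamma_{d+1}(t_i) : i in sg}
   whose projection (delete last coordinate) is p. *)
Definition height_rel {R : realType} {n : nat} (d : nat) (t : 'I_n -> R)
  (sg : {set 'I_n}) (p : 'rV[R]_d) (y : R) : Prop :=
  exists lam, [/\ convex_coeffs sg lam,
                  p = \sum_i lam i *: gamma d (t i)
                & y = \sum_i lam i * t i ^+ d.+1].

(* The height function h_sigma (its value is the unique y above when
   p is in conv(sigma); arbitrary otherwise). *)
Definition height {R : realType} {n : nat} (d : nat) (t : 'I_n -> R)
  (sg : {set 'I_n}) (p : 'rV[R]_d) : R :=
  xget 0 (height_rel d t sg p).

Definition overlap {R : realType} {n : nat} (d : nat) (t : 'I_n -> R)
  (sg tau : {set 'I_n}) : Prop :=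
  conv d t (sg :&: tau) `<` (conv d t sg `&` conv d t tau).

Definition lt_simp {R : realType} {n : nat} (d : nat) (t : 'I_n -> R)
  (sg tau : {set 'I_n}) : Prop :=
  overlap d t sg tau /\
  forall p, conv d t sg p -> conv d t tau p -> height d t sg p <= height d t tau p.

(* Triangulations of C(n,d) with vertices in [n]: geometric simplicial
   complexes (simplices of size <= d+1, closed under faces, any two meeting
   in a common face, i.e. not overlapping) whose union is C(n,d). *)
Definition triangulation {R : realType} {n : nat} (d : nat) (t : 'I_n -> R)
  (T : {set {set 'I_n}}) : Prop :=
  [/\ forall sg, sg \in T -> (#|sg| <= d.+1)%N,
      forall sg tau : {set 'I_n}, sg \in T -> tau \subset sg -> tau \in T,
      forall sg tau : {set 'I_n}, sg \in T -> tau \in T -> ~ overlap d t sg tau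
    & forall p : 'rV[R]_d, conv d t [set: 'I_n]%SET p <-> exists2 sg, sg \in T & conv d t sg p].

Definition height_T {R : realType} {n : nat} (d : nat) (t : 'I_n -> R)
  (T : {set {set 'I_n}}) (p : 'rV[R]_d) : R :=
  match [pick tau in T | `[< conv d t tau p >]] with
  | Some tau => height d t tau p
  | None => 0
  end.

Definition le_T {R : realType} {n : nat} (d : nat) (t : 'I_n -> R)
  (sg : {set 'I_n}) (T : {set {set 'I_n}}) : Prop :=
  forall p : 'rV[R]_d, conv d t sg p -> height d t sg p <= height_T d t T p.

From HB Require Import structures.
From mathcomp Require Import all_boot all_order all_algebra.
From mathcomp Require Import boolp classical_sets reals.
Import Order.TTheory GRing.Theory Num.Theory.
Local Open Scope ring_scope.

(* Any d+1 distinct points of the moment curve are affinely independent (a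
   Vandermonde argument), so a point of conv(sigma) has unique barycentric
   coordinates and h_sigma is well defined.  If sigma and tau do not overlap,
   every common point lies in conv(sigma :&: tau), where both heights are computed
   from the same coordinates and hence agree.  Thus h_T(p) = h_tau(p) for every
   tau in T containing p, and both implications reduce to comparing h_sigma with
   h_tau on conv(sigma) :&: conv(tau). *)

Section VanishingMoments.
Context {R : idomainType} {I : finType} {x c : I -> R} {k : nat}.
Hypothesis moments0 : forall j, (j <= k)%N -> \sum_i c i * x i ^+ j = 0.

Lemma sum_mul_horner_eq0 {P : {poly R}} :
  (size P <= k.+1)%N -> \sum_i c i * P.[x i] = 0.
Proof.
move=> sizeP; under eq_bigr => i _ do rewrite horner_coef big_distrr /=.
rewrite exchange_big /= big1 // => j _.
have jk : (j <= k)%N by rewrite -ltnS; apply: leq_trans (ltn_ord j) sizeP.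
under eq_bigr => i _ do rewrite mulrCA.
by rewrite -big_distrr /= moments0 ?mulr0.
Qed.

Lemma vanishing_moments_eq0 (S : {set I}) :
  {in S &, injective x} -> (#|S| <= k.+1)%N ->
  (forall i, i \notin S -> c i = 0) -> forall i, c i = 0.
Proof.
move=> xinj cardS c_out i; have [iS|] := boolP (i \in S); last exact: c_out.
pose P := \prod_(l in S :\ i) ('X - (x l)%:P).
have P_root l : l \in S :\ i -> P.[x l] = 0.
  by move=> lSi; rewrite horner_prod (bigD1 l) //= hornerXsubC subrr mul0r.
have Pi_neq0 : P.[x i] != 0.
  rewrite horner_prod; apply/prodf_neq0 => l; rewrite in_setD1 => /andP[li lS].
  by rewrite hornerXsubC subr_eq0; apply: contra li => /eqP/xinj->.
have sizeP : (size P <= k.+1)%N.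
  rewrite (cardsD1 i S) iS in cardS.
  by rewrite /P -big_enum size_prod_XsubC -cardE.
have := sum_mul_horner_eq0 sizeP; rewrite (bigD1 i) //= big1 ?addr0.
  by move/eqP; rewrite mulf_eq0 (negbTE Pi_neq0) orbF => /eqP.
move=> l li; have [lS|lS] := boolP (l \in S); last by rewrite c_out ?mul0r.
by rewrite P_root ?mulr0 // in_setD1 li.
Qed.

End VanishingMoments.

Section MomentCurveSimplices.
Context {R : realType} {n d : nat} {t : 'I_n -> R}.
Hypothesis t_incr : forall i j : 'I_n, (i < j)%N -> t i < t j.

Lemma t_inj : injective t.
Proof. by apply: inc_inj; apply: le_mono => i j; rewrite ltEord; apply: t_incr. Qed.

Lemma convex_coeffsS {A S : {set 'I_n}} {lam : 'I_n -> R} :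
  A \subset S -> convex_coeffs A lam -> convex_coeffs S lam.
Proof.
move=> AS [lam_ge0 lam_out lam_sum1]; split=> // i iS; apply: lam_out.
by apply: contraNN iS; apply: (fintype.subsetP AS).
Qed.

Lemma convS {A S : {set 'I_n}} {p} : A \subset S -> conv d t A p -> conv d t S p.
Proof.
by move=> AS [lam [lamA ->]]; exists lam; split=> //; apply: convex_coeffsS lamA.
Qed.

Lemma sum_gamma_coord (lam : 'I_n -> R) (k : 'I_d) :
  (\sum_i lam i *: gamma d (t i)) 0 k = \sum_i lam i * t i ^+ k.+1.
Proof. by rewrite summxE; apply: eq_bigr => i _; rewrite !mxE. Qed.

Lemma convex_coeffs_unique {S : {set 'I_n}} {lam mu : 'I_n -> R} :
  (#|S| <= d.+1)%N -> convex_coeffs S lam -> convex_coeffs S mu ->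
  \sum_i lam i *: gamma d (t i) = \sum_i mu i *: gamma d (t i) ->
  lam =1 mu.
Proof.
move=> cardS [_ lam_out lam_sum1] [_ mu_out mu_sum1] same_point.
have moments0 j : (j <= d)%N -> \sum_i (lam i - mu i) * t i ^+ j = 0.
  case: j => [|j] jd.
    by under eq_bigr do rewrite expr0 mulr1; rewrite sumrB lam_sum1 mu_sum1 subrr.
  under eq_bigr do rewrite mulrBl.
  have := congr1 (fun v : 'rV[R]_d => v 0 (Ordinal jd)) same_point.
  by rewrite /= !sum_gamma_coord sumrB => ->; rewrite subrr.
move=> i; apply/eqP; rewrite -subr_eq0; apply/eqP; move: i.
apply: (vanishing_moments_eq0 moments0 S) => //.
- by move=> i j _ _; apply: t_inj.
- by move=> i iS; rewrite lam_out // mu_out // subrr.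
Qed.

Lemma heightE {A S : {set 'I_n}} {lam : 'I_n -> R} {p} :
  (#|S| <= d.+1)%N -> A \subset S -> convex_coeffs A lam ->
  p = \sum_i lam i *: gamma d (t i) ->
  height d t S p = \sum_i lam i * t i ^+ d.+1.
Proof.
move=> cardS AS /(convex_coeffsS AS) lamS ->; rewrite /height.
case: xgetP => [y -> [mu [muS same_point ->]] | no_height].
  have lam_eq_mu := convex_coeffs_unique cardS lamS muS same_point.
  by apply: eq_bigr => i _; rewrite lam_eq_mu.
by exfalso; apply: (no_height (\sum_i lam i * t i ^+ d.+1)); exists lam.
Qed.

Lemma height_setI {S1 S2 : {set 'I_n}} {p} :
  (#|S1| <= d.+1)%N -> (#|S2| <= d.+1)%N -> conv d t (S1 :&: S2) p ->
  height d t S1 p = height d t S2 p.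
Proof.
move=> card1 card2 [lam [lamI ep]].
rewrite (heightE card1 (subsetIl _ _) lamI ep).
by rewrite (heightE card2 (subsetIr _ _) lamI ep).
Qed.

Lemma conv_setI_of_not_overlap {S1 S2 : {set 'I_n}} {p} :
  ~ overlap d t S1 S2 -> conv d t S1 p -> conv d t S2 p -> conv d t (S1 :&: S2) p.
Proof.
move=> no_ov p1 p2; apply: contrapT => pI; apply: no_ov; split.
  by move=> q qI; split; apply: convS qI; [exact: subsetIl | exact: subsetIr].
by move=> convI; apply: pI; apply: convI.
Qed.

Lemma height_eq_of_not_overlap {S1 S2 : {set 'I_n}} {p} :
  (#|S1| <= d.+1)%N -> (#|S2| <= d.+1)%N -> ~ overlap d t S1 S2 ->
  conv d t S1 p -> conv d t S2 p -> height d t S1 p = height d t S2 p.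
Proof.
move=> card1 card2 no_ov p1 p2.
by apply: height_setI => //; apply: conv_setI_of_not_overlap.
Qed.

Context {T : {set {set 'I_n}}}.
Hypothesis T_triang : triangulation d t T.

Lemma height_TE {tau p} :
  tau \in T -> conv d t tau p -> height_T d t T p = height d t tau p.
Proof.
case: T_triang => cardT _ T_no_ov _ tauT ptau; rewrite /height_T.
case: pickP => [tau' /andP[tau'T /asboolP ptau'] | none]; last first.
  by move: (none tau); rewrite tauT /= => /asboolPn.
exact: height_eq_of_not_overlap (cardT _ tau'T) (cardT _ tauT)
  (T_no_ov _ _ tau'T tauT) ptau' ptau.
Qed.

Lemma triangulation_cover {p} :
  conv d t [set: 'I_n]%SET p -> exists2 tau, tau \in T & conv d t tau p.
Proof. by case: T_triang => _ _ _ cover /cover. Qed.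

End MomentCurveSimplices.

Theorem lemma2p9 (R : realType) (n d : nat) (t : 'I_n -> R)
  (ht : forall i j : 'I_n, (i < j)%N -> t i < t j)
  (T : {set {set 'I_n}}) (hT : triangulation d t T)
  (sg : {set 'I_n}) (hsg : (#|sg| <= d.+1)%N) :
  le_T d t sg T <->
  (forall tau, tau \in T -> ~ overlap d t sg tau \/ lt_simp d t sg tau).
Proof.
have [cardT _ _ _] := hT; split.
- move=> sg_le tau tauT; have [ov|] := pselect (overlap d t sg tau); last by left.
  by right; split=> // p psg ptau; rewrite -(height_TE ht hT tauT ptau); apply: sg_le.
- move=> sg_cmp p psg.
  have [tau tauT ptau] := triangulation_cover hT (convS (finset.subsetT sg) psg).
  rewrite (height_TE ht hT tauT ptau).
  case: (sg_cmp tau tauT) => [no_ov | [_ sg_below]]; last exact: sg_below.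
  by rewrite (height_eq_of_not_overlap ht hsg (cardT _ tauT) no_ov psg ptau).
Qed.
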